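(* For all $n,d\in\mathbb N$, $$\mathbf c_n(\ell_\infty^d(\mathbb C))\ge\frac12\sqrt{\frac{d^n}{(24n)^d}}.$$
   Context: For a complex Banach space $X$ and $n\in\mathbb N$, $\mathbf c_n(X)$ is the smallest constant such that for all $\psi_1,\dots,\psi_n\in X^*$, $\|\psi_1\|\cdots\|\psi_n\|\le \mathbf c_n(X)\,\|\psi_1\cdots\psi_n\|$, where $\psi_1\cdots\psi_n$ is the pointwise product and $\|P\|=\sup_{\|x\|=1}|P(x)|$. $\ell_\infty^d(\mathbb C)$ is $\mathbb C^d$ with the sup norm. *)

From mathcomp Require Import all_boot all_order all_algebra.
From mathcomp Require Import complex.
From mathcomp Require Import all_classical all_reals.
Set Implicit Arguments. Unset Strict Implicit. Unset Printing Implicit Defensive.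
Import Order.TTheory GRing.Theory Num.Theory.
Local Open Scope ring_scope.
Local Open Scope classical_set_scope.

Definition cmod (R : realType) (z : R[i]) : R :=
  Num.sqrt (complex.Re z ^+ 2 + complex.Im z ^+ 2).

Definition supnorm (R : realType) (d : nat) (x : 'rV[R[i]]_d) : R :=
  \big[Num.max/0]_(j < d) cmod (x 0 j).

Definition fnorm (R : realType) (d : nat) (P : 'rV[R[i]]_d -> R[i]) : R :=
  sup [set cmod (P x) | x in [set x : 'rV[R[i]]_d | supnorm x = 1]].

(* psi is a (continuous: automatic in finite dimension) C-linear functional *)
Definition is_functional (R : realType) (d : nat) (psi : 'rV[R[i]]_d -> R[i]) :=
  forall (a : R[i]) (x y : 'rV[R[i]]_d), psi (a *: x + y) = a * psi x + psi y.

Definition cn_admissible (R : realType) (n d : nat) (C : R) :=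
  forall psi : 'I_n -> 'rV[R[i]]_d -> R[i],
    (forall k, is_functional (psi k)) ->
    \prod_(k < n) fnorm (psi k) <= C * fnorm (fun x => \prod_(k < n) psi k x).

Definition cn_linfty (R : realType) (n d : nat) : R :=
  inf [set C : R | cn_admissible n d C].

(* A lower bound comes from the n functionals psi_k(x) = sum_(j < D) w^(j k) x_j,
   where D = min(d, n) and w is a primitive D-th root of unity.  Each has norm D.
   For a block of D consecutive indices k, Parseval's identity for the discrete
   Fourier transform and the AM-GM inequality bound the product of the
   |psi_k(x)|^2 by D^D when ||x|| <= 1; the remaining n mod D factors are at
   most D each.  Hence ||psi_1 ... psi_n||^2 <= D^(2n - D m) with m = n %/ D,
   so every admissible constant is at least D^(D m / 2), and an elementary
   estimate compares this with d^n / (24 n)^d.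
   Since c_n is an infimum, admissible constants must also be shown to exist:
   for arbitrary functionals, a grid point x with |psi_k(x)| >=
   max_j |psi_k(e_j)| / (2 (n + 1)) for all k exists by pigeonhole. *)

From mathcomp Require Import all_boot all_order all_algebra.
From mathcomp Require Import cyclic separable.
From mathcomp Require cyclotomic.
From mathcomp Require Import complex.
From mathcomp Require Import all_classical all_reals.
From mathcomp Require Import ring zify.
Import Order.TTheory GRing.Theory Num.Theory.

Lemma card_bigcup_le {I T : finType} (B : I -> {set T}) :
  #|\bigcup_i B i| <= \sum_i #|B i|.
Proof.
elim/big_rec2: _ => [|i U s _ IH]; first by rewrite cards0.
by rewrite (leq_trans (leq_card_setU _ _)) ?leq_add2l.
Qed.

Lemma exists_notin_small_sets {I T : finType} (B : I -> {set T}) :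
  \sum_i #|B i| < #|T| -> exists x, forall i, x \notin B i.
Proof.
move=> small; case: (pickP [pred x | x \notin \bigcup_i B i]) => [x /= xB|none].
  by exists x => i; apply: contra xB => xBi; apply/bigcupP; exists i.
suff : #|T| <= #|\bigcup_i B i|.
  by rewrite leqNgt (leq_ltn_trans (card_bigcup_le B) small).
rewrite -cardsT; apply: subset_leq_card; apply/fintype.subsetP => x _.
by move/negbT: (none x); rewrite negbK.
Qed.

Lemma leq_card_line_transversal {I : finType} {N : nat} (j0 : I)
    (B : {set {ffun I -> 'I_N}}) :
  {in B &, forall g g' : {ffun I -> 'I_N}, (forall j, j != j0 -> g j = g' j) -> g = g'} ->
  #|B| * N <= #|{ffun I -> 'I_N}|.
Proof.
move=> lineB.
pose reset (p : {ffun I -> 'I_N} * 'I_N) := [ffun j => if j == j0 then p.2 else p.1 j].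
have reset_inj : {in finset.setX B [set: 'I_N] &, injective reset}.
  move=> [g i] [g' i'] /finset.setXP[Bg _] /finset.setXP[Bg' _] /ffunP eq_reset.
  have := eq_reset j0; rewrite !ffunE eqxx /= => <-; congr pair.
  by apply: lineB => // j /negbTE j0j; have := eq_reset j; rewrite !ffunE j0j.
by rewrite -[N in _ * N]card_ord -cardsT -cardsX -(card_in_imset reset_inj) max_card.
Qed.

Lemma expn_le_block_bound {n d : nat} : 0 < n -> 0 < d ->
  d ^ n <= 4 * (24 * n) ^ d * minn d n ^ (minn d n * (n %/ minn d n)).
Proof.
move=> n_gt0 d_gt0; case: (leqP d n) => [le_dn|lt_nd].
  rewrite {1}(divn_eq n d) expnD [n %/ d * d]mulnC [_ * d ^ (d * _)]mulnC leq_mul2l.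
  apply/orP; right; apply: leq_trans (_ : d ^ d <= 4 * (24 * n) ^ d).
    exact: leq_pexp2l d_gt0 (ltnW (ltn_pmod n d_gt0)).
  apply: leq_trans (leq_pmull _ (isT : 0 < 4)); rewrite leq_exp2r //.
  exact: leq_trans le_dn (leq_pmull n (isT : 0 < 24)).
(* with q = d %/ n: d < (q + 1) n and q + 1 <= 2 ^ q give d ^ n <= 2 ^ d * n ^ n *)
rewrite divnn n_gt0 muln1; set q := d %/ n.
have lt_d : d < q.+1 * n by rewrite mulSn {1}(divn_eq d n) addnC ltn_add2r ltn_pmod.
have le_q : q.+1 ^ n <= 2 ^ d.
  apply: (@leq_trans ((2 ^ q) ^ n)); first by rewrite leq_exp2r // ltn_expl.
  by rewrite -expnM leq_exp2l // leq_divM.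
apply: (@leq_trans (q.+1 ^ n * n ^ n)); first by rewrite -expnMn leq_exp2r // ltnW.
rewrite leq_mul2r (leq_trans le_q) ?orbT // (leq_trans _ (leq_pmull _ (isT : 0 < 4))) //.
by rewrite leq_exp2r // (leq_trans _ (leq_pmulr 24 n_gt0)).
Qed.

Local Open Scope ring_scope.

Lemma prod_nat_periodic (S : comPzSemiRingType) (D m : nat) (f : nat -> S) :
  (forall k, f k = f (k %% D)%N) ->
  \prod_(0 <= k < m * D) f k = (\prod_(s < D) f s) ^+ m.
Proof.
move=> fD; elim: m => [|m IHm]; first by rewrite mul0n big_geq ?expr0.
rewrite mulSn addnC (big_cat_nat _ (leq_addr _ _)) //= IHm exprSr; congr (_ * _).
rewrite -{1}[(m * D)%N]add0n big_addn addKn big_mkord; apply: eq_bigr => s _.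
by rewrite fD addnC modnMDl -fD.
Qed.

Lemma closed_prim_root_exists (F : closedFieldType) (n : nat) :
  (0 < n)%N -> n%:R != 0 :> F -> exists z : F, n.-primitive_root z.
Proof.
move=> n_gt0 nF0; pose p : {poly F} := 'X^n - 1.
have [r Dp] := closed_field_poly_normal p.
rewrite (monicP _) ?monicXnsubC // scale1r in Dp.
have rn1 : all n.-unity_root r by apply/allP=> z; rewrite -root_prod_XsubC -Dp.
have sz_r : (n < (size r).+1)%N by rewrite -(size_prod_XsubC r id) -Dp size_XnsubC.
have [|z] := hasP (has_prim_root n_gt0 rn1 _ sz_r); last by exists z.
by rewrite -separable_prod_XsubC -Dp cyclotomic.separable_Xn_sub_1.
Qed.

Section DiscreteFourier.
Context {C : numClosedFieldType} {D : nat} {z : C}.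
Hypothesis zD : D.-primitive_root z.

Lemma prim_root_norm1 : `|z| = 1.
Proof.
have D_gt0 := prim_order_gt0 zD.
apply/eqP; rewrite -(pexpr_eq1 D_gt0) ?normr_ge0 //.
by rewrite -normrX prim_expr_order // normr1.
Qed.

Lemma sum_prim_root_conj (j l : 'I_D) :
  \sum_(s < D) z ^+ (j * s) * (z ^+ (l * s))^* = (j == l)%:R * D%:R.
Proof.
pose w := z ^+ j * (z ^+ l)^*.
have -> : \sum_(s < D) z ^+ (j * s) * (z ^+ (l * s))^* = \sum_(s < D) w ^+ s.
  by apply: eq_bigr => s _; rewrite exprMn !exprM rmorphXn.
have zl1 : z ^+ l * (z ^+ l)^* = 1 by rewrite -normCK normrX prim_root_norm1 !expr1n.
have [eq_jl|ne_jl] := eqVneq j l.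
  rewrite /w eq_jl zl1 mul1r.
  under eq_bigr do rewrite expr1n.
  by rewrite sumr_const card_ord.
have w1 : w != 1.
  apply: contra_neq ne_jl => w1; apply: val_inj.
  have : z ^+ j == z ^+ l by rewrite -[z ^+ j]mulr1 -zl1 mulrCA -/w w1 mulr1.
  by rewrite (eq_prim_root_expr zD) !modn_small // => /eqP.
have wD : w ^+ D = 1.
  rewrite exprMn -rmorphXn -!exprM (mulnC j) (mulnC l) !exprM.
  by rewrite !(prim_expr_order zD) !expr1n rmorph1 mulr1.
have := subrX1 w D; rewrite wD subrr => /esym /eqP.
by rewrite mulf_eq0 subr_eq0 (negbTE w1) mul0r => /eqP.
Qed.

Lemma dft_parseval (a : 'I_D -> C) :
  \sum_(s < D) `|\sum_(j < D) z ^+ (j * s) * a j| ^+ 2 = D%:R * \sum_(j < D) `|a j| ^+ 2.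
Proof.
transitivity (\sum_(j < D) \sum_(l < D)
    a j * (a l)^* * \sum_(s < D) z ^+ (j * s) * (z ^+ (l * s))^*).
  under eq_bigr do rewrite normCK rmorph_sum big_distrlr /=.
  rewrite exchange_big; apply: eq_bigr => j _.
  rewrite exchange_big; apply: eq_bigr => l _.
  by rewrite mulr_sumr; apply: eq_bigr => s _; rewrite rmorphM; ring.
rewrite mulr_sumr; apply: eq_bigr => j _.
under eq_bigr do rewrite sum_prim_root_conj.
rewrite (bigD1 j) //= eqxx big1 => [|l ne_lj]; last by rewrite eq_sym (negbTE ne_lj) !mul0r mulr0.
by rewrite mul1r addr0 normCK mulrC.
Qed.

Lemma dft_prod_sqr_le (a : 'I_D -> C) : (forall j, `|a j| <= 1) ->
  \prod_(s < D) `|\sum_(j < D) z ^+ (j * s) * a j| ^+ 2 <= D%:R ^+ D.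
Proof.
move=> a_le1; pose E (s : 'I_D) := `|\sum_(j < D) z ^+ (j * s) * a j| ^+ 2.
have E_ge0 : {in predT, forall s, 0 <= E s} by move=> s _; rewrite exprn_ge0.
have := (leif_AGM E_ge0).1; rewrite cardT size_enum_ord => /le_trans; apply.
have D_gt0 := prim_order_gt0 zD.
rewrite dft_parseval // mulrAC divff ?mul1r ?pnatr_eq0 -?lt0n //.
have sum_le : \sum_(j < D) `|a j| ^+ 2 <= D%:R.
  rewrite -[X in _ <= X%:R]card_ord -sumr_const; apply: ler_sum => j _.
  by rewrite expr_le1.
apply: lerXn2r => //; rewrite ?nnegrE ?ler0n //.
by apply: sumr_ge0 => j _; rewrite exprn_ge0.
Qed.

End DiscreteFourier.

Local Open Scope complex_scope.

Section ComplexModulus.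
Context {R : realType}.
Implicit Types (z w : R[i]) (c : R).

Lemma cmodE z : (cmod z)%:C = `|z|.
Proof. by rewrite normc_def. Qed.

Lemma cmod_ge0 z : 0 <= cmod z.
Proof. exact: sqrtr_ge0. Qed.

Lemma cmodM z w : cmod (z * w) = cmod z * cmod w.
Proof. by apply: complexI; rewrite rmorphM /= !cmodE normrM. Qed.

Lemma cmodX z k : cmod (z ^+ k) = cmod z ^+ k.
Proof. by apply: complexI; rewrite rmorphXn /= !cmodE normrX. Qed.

Lemma cmodD z w : cmod (z + w) <= cmod z + cmod w.
Proof. by rewrite -lecR rmorphD /= !cmodE ler_normD. Qed.

Lemma cmodN z : cmod (- z) = cmod z.
Proof. by apply: complexI; rewrite !cmodE normrN. Qed.

Lemma cmodR c : cmod c%:C = `|c|.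
Proof. by rewrite /cmod /= expr0n /= addr0 sqrtr_sqr. Qed.

Lemma cmod_nat (k : nat) : cmod (k%:R : R[i]) = k%:R.
Proof. by rewrite -(rmorph_nat (real_complex R)) cmodR normr_nat. Qed.

Lemma cmod0 : cmod (0 : R[i]) = 0.
Proof. exact: (cmod_nat 0). Qed.

Lemma cmod1 : cmod (1 : R[i]) = 1.
Proof. exact: (cmod_nat 1). Qed.

Lemma cmodV z : cmod z^-1 = (cmod z)^-1.
Proof. by apply: complexI; rewrite fmorphV /= !cmodE normfV. Qed.

Lemma cmod_sum (I : Type) (r : seq I) (P : pred I) (F : I -> R[i]) :
  cmod (\sum_(i <- r | P i) F i) <= \sum_(i <- r | P i) cmod (F i).
Proof.
elim/big_rec2: _ => [|i y1 y2 _ IH]; first by rewrite cmod0.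
by rewrite (le_trans (cmodD _ _)) // lerD2l.
Qed.

Lemma cmod_prod (I : Type) (r : seq I) (P : pred I) (F : I -> R[i]) :
  cmod (\prod_(i <- r | P i) F i) = \prod_(i <- r | P i) cmod (F i).
Proof. by apply: (big_morph _ cmodM cmod1). Qed.

End ComplexModulus.

Section SupNorm.
Context {R : realType} {d : nat}.
Implicit Types (x y : 'rV[R[i]]_d) (P psi : 'rV[R[i]]_d -> R[i]).

Lemma supnorm_ge x j : cmod (x 0 j) <= supnorm x.
Proof. exact: le_bigmax. Qed.

Lemma supnorm_le x (c : R) : 0 <= c -> (forall j, cmod (x 0 j) <= c) -> supnorm x <= c.
Proof. by move=> c0 xc; apply: bigmax_le. Qed.

Lemma supnormZ x (c : R) : 0 <= c -> supnorm (c%:C *: x) = c * supnorm x.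
Proof.
move=> c0; rewrite /supnorm; elim/big_rec2: _ => [|j y1 y2 _ ->]; first by rewrite mulr0.
by rewrite maxr_pMr // mxE cmodM cmodR ger0_norm.
Qed.

Lemma supnorm_const1 : (0 < d)%N -> supnorm (const_mx 1 : 'rV[R[i]]_d) = 1.
Proof.
move=> d_gt0; apply/eqP; rewrite eq_le supnorm_le ?ler01 //= => [|j]; last by rewrite mxE cmod1.
by rewrite (le_trans _ (supnorm_ge _ (Ordinal d_gt0))) // mxE cmod1.
Qed.

Lemma fnorm_ge P (B : R) x :
  (forall y, supnorm y = 1 -> cmod (P y) <= B) -> supnorm x = 1 -> cmod (P x) <= fnorm P.
Proof.
move=> PB x1; apply: ub_le_sup; last by exists x.
by exists B => _ [y y1 <-]; exact: PB.
Qed.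

Lemma fnorm_le P (B : R) :
  (0 < d)%N -> (forall y, supnorm y = 1 -> cmod (P y) <= B) -> fnorm P <= B.
Proof.
move=> d_gt0 PB; apply: ge_sup; last by move=> _ [y y1 <-]; exact: PB.
by exists (cmod (P (const_mx 1))), (const_mx 1) => //; exact: supnorm_const1.
Qed.

Lemma fnorm_ge0 P : (0 < d)%N -> 0 <= fnorm P.
Proof.
move=> d_gt0; rewrite /fnorm; have [supP|/sup_out ->] := pselect (has_sup
  [set cmod (P x) | x in [set x : 'rV[R[i]]_d | supnorm x = 1]]) => //.
rewrite (le_trans (cmod_ge0 (P (const_mx 1)))) //.
by apply: sup_upper_bound => //; exists (const_mx 1) => //=; rewrite supnorm_const1.
Qed.

End SupNorm.

Section Functionals.
Context {R : realType} {d : nat}.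
Implicit Types (x y : 'rV[R[i]]_d) (psi : 'rV[R[i]]_d -> R[i]).

Lemma functional0 psi : is_functional psi -> psi 0 = 0.
Proof.
move=> psiL; have := psiL 1 0 0; rewrite scale1r addr0 mul1r => psi00.
by apply: (addrI (psi 0)); rewrite addr0 -psi00.
Qed.

Lemma functionalZ psi a x : is_functional psi -> psi (a *: x) = a * psi x.
Proof. by move=> psiL; rewrite -[a *: x]addr0 psiL functional0 // addr0. Qed.

Lemma functionalB psi x y : is_functional psi -> psi (x - y) = psi x - psi y.
Proof. by move=> psiL; rewrite addrC -scaleN1r psiL mulN1r addrC. Qed.

Lemma functional_sum_delta psi x :
  is_functional psi -> psi x = \sum_(j < d) x 0 j * psi (delta_mx 0 j).
Proof.
move=> psiL; rewrite {1}(row_sum_delta x).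
elim/big_rec2: _ => [|j y1 y2 _ <-]; first exact: functional0.
by rewrite psiL.
Qed.

Lemma cmod_functional_le {psi x} {m : R} :
  is_functional psi -> supnorm x <= 1 -> (forall j, cmod (psi (delta_mx 0 j)) <= m) ->
  cmod (psi x) <= d%:R * m.
Proof.
move=> psiL x1 psi_m; rewrite functional_sum_delta //; apply: le_trans (cmod_sum _ _ _ _) _.
rewrite mulr_natl -[d in m *+ d]card_ord -sumr_const; apply: ler_sum => j _.
by rewrite cmodM -[m]mul1r ler_pM ?cmod_ge0 ?(le_trans (supnorm_ge _ _)).
Qed.

Lemma cmod_prod_le_fnorm {n} {psi : 'I_n -> 'rV[R[i]]_d -> R[i]} {x} :
  (forall k, is_functional (psi k)) -> 0 < supnorm x <= 1 ->
  cmod (\prod_(k < n) psi k x) <= fnorm (fun y => \prod_(k < n) psi k y).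
Proof.
move=> psiL /andP[x_gt0 x_le1]; set s := supnorm x.
have s_inv_ge0 : 0 <= s^-1 by rewrite invr_ge0 ltW.
pose M k := \big[Num.max/0]_j cmod (psi k (delta_mx 0 j)).
have prod_bounded y : supnorm y = 1 -> cmod (\prod_k psi k y) <= \prod_k (d%:R * M k).
  move=> y1; rewrite cmod_prod; apply: ler_prod => k _; rewrite cmod_ge0.
  by apply: cmod_functional_le; rewrite ?y1 // => j; apply: le_bigmax.
have y1 : supnorm (s^-1%:C *: x) = 1 by rewrite supnormZ // mulVf ?gt_eqF.
apply: le_trans (@fnorm_ge _ _ (fun y => \prod_k psi k y) _ _ prod_bounded y1) => /=.
under [X in _ <= cmod X]eq_bigr do rewrite functionalZ //.
rewrite prodrMl card_ord cmodM cmodX cmodR ger0_norm //.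
by rewrite ler_peMl ?cmod_ge0 // exprn_ege1 // invf_ge1.
Qed.

End Functionals.

Section GridPoints.
Context {R : realType} {d N : nat}.
Implicit Types (g : {ffun 'I_d -> 'I_N}) (psi : 'rV[R[i]]_d -> R[i]).

Definition grid_point g : 'rV[R[i]]_d := \row_j ((g j).+1%:R / N%:R)%:C.

Lemma supnorm_grid_point g : (0 < d)%N -> 0 < supnorm (grid_point g) <= 1.
Proof.
move=> d_gt0; have N_gt0 : (0 < N)%N := leq_ltn_trans (leq0n _) (ltn_ord (g (Ordinal d_gt0))).
have coord j : cmod (grid_point g 0 j) = (g j).+1%:R / N%:R.
  by rewrite mxE cmodR ger0_norm // divr_ge0.
rewrite (lt_le_trans _ (supnorm_ge _ (Ordinal d_gt0))) ?coord ?divr_gt0 ?ltr0n //=.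
by apply: supnorm_le => // j; rewrite coord ler_pdivrMr ?ltr0n // mul1r ler_nat.
Qed.

Lemma functional_grid_line {psi} {j0 : 'I_d} {g g'} :
  is_functional psi -> (forall j, j != j0 -> g j = g' j) -> g j0 != g' j0 ->
  cmod (psi (delta_mx 0 j0)) / N%:R <=
    cmod (psi (grid_point g)) + cmod (psi (grid_point g')).
Proof.
move=> psiL agree ne_g.
have line : grid_point g - grid_point g' =
    (((g j0)%:R - (g' j0)%:R) / N%:R)%:C *: delta_mx 0 j0.
  apply/rowP => j; rewrite !mxE; have [->|ne_j] := eqVneq j j0.
    by rewrite eqxx mulr1 -rmorphB -mulrBl !mulrSr opprD addrACA subrr addr0.
  by rewrite andbF mulr0 agree // subrr.
rewrite -[cmod (psi (grid_point g'))]cmodN (le_trans _ (cmodD _ _)) //.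
rewrite -functionalB // line functionalZ // cmodM cmodR mulrC.
rewrite ler_wpM2r ?cmod_ge0 // normrM normfV normr_nat -[X in X <= _]mul1r.
rewrite ler_wpM2r ?invr_ge0 ?ler0n //.
have [lt_g|lt_g'|eq_g] := ltngtP (g j0) (g' j0); last by rewrite (val_inj eq_g) eqxx in ne_g.
  by rewrite distrC -natrB ?normr_nat ?ler1n ?subn_gt0 // ltnW.
by rewrite -natrB ?normr_nat ?ler1n ?subn_gt0 // ltnW.
Qed.

(* Pigeonhole: by [functional_grid_line], the grid points where [|psi k|] is small
   meet every line parallel to the [j0 k]-th axis at most once, so there are at
   most [N ^ (d - 1)] of them, and [n < N] such sets cannot cover the grid. *)
Lemma exists_grid_point_large {n : nat}
    (psi : 'I_n -> 'rV[R[i]]_d -> R[i]) (j0 : 'I_n -> 'I_d) :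
  (n < N)%N -> (forall k, is_functional (psi k)) ->
  exists g : {ffun 'I_d -> 'I_N}, forall k,
    cmod (psi k (delta_mx 0 (j0 k))) / (2 * N%:R) <= cmod (psi k (grid_point g)).
Proof.
move=> ltnN psiL; pose m k := cmod (psi k (delta_mx 0 (j0 k))).
pose small k := [set g : {ffun 'I_d -> 'I_N} | cmod (psi k (grid_point g)) < m k / (2 * N%:R)].
have N_gt0 : (0 < N)%N by apply: leq_ltn_trans ltnN.
have card_small k : (#|small k| * N <= #|{ffun 'I_d -> 'I_N}|)%N.
  apply: (leq_card_line_transversal (j0 k)) => g g'; rewrite !inE => gk g'k agree.
  apply/ffunP => j; have [->|/agree //] := eqVneq j (j0 k).
  apply/eqP; apply: contraT => ne_g; have := functional_grid_line (psiL k) agree ne_g.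
  apply: contraTT => _; rewrite -ltNge (lt_le_trans (ltrD gk g'k)) //.
  by rewrite invfM mulrA mulrAC -splitr.
have [g g_large] : exists g, forall k, g \notin small k.
  apply: exists_notin_small_sets; rewrite -(ltn_pmul2r N_gt0) big_distrl /=.
  apply: (@leq_ltn_trans (\sum_(k < n) #|{ffun 'I_d -> 'I_N}|)); first exact: leq_sum.
  by rewrite sum_nat_const card_ord mulnC ltn_pmul2l // card_ffun card_ord expn_gt0 N_gt0.
by exists g => k; have := g_large k; rewrite inE -leNgt.
Qed.

End GridPoints.

Lemma cn_admissible_grid_bound {R : realType} (n d : nat) :
  (0 < d)%N -> cn_admissible (R:=R) n d ((2 * n.+1 * d)%:R ^+ n).
Proof.
move=> d_gt0 psi psiL; pose M k j := cmod (psi k (delta_mx 0 j)).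
pose j0 k := [arg max_(j > Ordinal d_gt0) M k j]%O.
have M_le k j : M k j <= M k (j0 k) by rewrite /j0; case: arg_maxP => // i _; apply.
have [g g_large] := exists_grid_point_large psi j0 (ltnSn n) psiL.
have fnorm_le_max k : fnorm (psi k) <= d%:R * M k (j0 k).
  by apply: fnorm_le => // y y1; apply: cmod_functional_le (psiL k) _ (M_le k); rewrite y1.
have split_const : \prod_(k < n) (d%:R * M k (j0 k)) =
    (2 * n.+1 * d)%:R ^+ n * \prod_(k < n) (M k (j0 k) / (2 * n.+1%:R)).
  rewrite -[n in _ ^+ n]card_ord -prodr_const -big_split /=; apply: eq_bigr => k _.
  by rewrite !natrM; field; rewrite nat1r pnatr_eq0.
apply: le_trans (_ : \prod_(k < n) (d%:R * M k (j0 k)) <= _).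
  by apply: ler_prod => k _; rewrite fnorm_ge0 ?fnorm_le_max.
rewrite split_const ler_wpM2l ?exprn_ge0 ?ler0n //.
apply: le_trans (cmod_prod_le_fnorm psiL (supnorm_grid_point g d_gt0)).
rewrite cmod_prod; apply: ler_prod => k _.
by rewrite /M divr_ge0 ?cmod_ge0 ?mulr_ge0 ?ler0n ?g_large.
Qed.

Section FourierFunctionals.
Context {R : realType} {d D : nat} (hD : (D <= d)%N) (z : R[i]).

Definition fourier_functional (k : nat) (x : 'rV[R[i]]_d) : R[i] :=
  \sum_(j < D) z ^+ (j * k) * x 0 (widen_ord hD j).

Lemma fourier_functional_is_functional k : is_functional (fourier_functional k).
Proof.
move=> a x y; rewrite /fourier_functional mulr_sumr -big_split /=.
by apply: eq_bigr => j _; rewrite !mxE mulrDr mulrCA.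
Qed.

Hypothesis zD : D.-primitive_root z.

Lemma cmod_prim_root : cmod z = 1.
Proof. by apply: complexI; rewrite cmodE (prim_root_norm1 zD). Qed.

Lemma fourier_functional_mod k x : fourier_functional k x = fourier_functional (k %% D) x.
Proof. by apply: eq_bigr => j _; rewrite !(mulnC j) !exprM (prim_expr_mod zD). Qed.

Lemma cmod_fourier_functional_le k x : supnorm x <= 1 -> cmod (fourier_functional k x) <= D%:R.
Proof.
move=> x_le1; apply: le_trans (cmod_sum _ _ _ _) _.
rewrite -[X in _ <= X%:R]card_ord -sumr_const; apply: ler_sum => j _.
by rewrite cmodM cmodX cmod_prim_root expr1n mul1r (le_trans (supnorm_ge _ _)).
Qed.

Lemma fnorm_fourier_functional_ge k : D%:R <= fnorm (fourier_functional k).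
Proof.
have D_gt0 := prim_order_gt0 zD; have d_gt0 := leq_trans D_gt0 hD.
have z_neq0 : z != 0 by rewrite -normr_eq0 (prim_root_norm1 zD) oner_eq0.
pose v : 'rV[R[i]]_d := \row_j (if (j < D)%N then (z ^+ (j * k))^-1 else 0).
have v1 : supnorm v = 1.
  apply/eqP; rewrite eq_le; apply/andP; split.
    apply: supnorm_le => // j; rewrite mxE; case: ifP => _; last by rewrite cmod0.
    by rewrite cmodV cmodX cmod_prim_root expr1n invr1.
  apply: le_trans (supnorm_ge _ (widen_ord hD (Ordinal D_gt0))).
  by rewrite mxE /= D_gt0 mul0n expr0 invr1 cmod1.
have -> : D%:R = cmod (fourier_functional k v).
  rewrite /fourier_functional (eq_bigr (fun=> 1)) => [|j _].
    by rewrite sumr_const card_ord cmod_nat.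
  by rewrite mxE /= ltn_ord mulfV // expf_neq0.
apply: (fnorm_ge _ D%:R) => // y y1; apply: cmod_fourier_functional_le.
by rewrite y1.
Qed.


Lemma prod_sqr_fourier_block_le x :
  supnorm x <= 1 -> \prod_(s < D) cmod (fourier_functional s x) ^+ 2 <= D%:R ^+ D.
Proof.
move=> x_le1; rewrite -lecR rmorph_prod rmorphXn rmorph_nat /=.
under eq_bigr do rewrite rmorphXn /= cmodE.
apply: (dft_prod_sqr_le zD) => j.
by rewrite -cmodE -(rmorph1 (real_complex R)) lecR (le_trans (supnorm_ge _ _)).
Qed.

Lemma prod_fourier_functional_sqr_le n x : supnorm x <= 1 ->
  (\prod_(k < n) cmod (fourier_functional k x)) ^+ 2 <=
    D%:R ^+ (D * (n %/ D) + 2 * (n %% D)).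
Proof.
move=> x_le1; pose f k := cmod (fourier_functional k x).
have f_ge0 k : 0 <= f k by exact: cmod_ge0.
have fD k : f k = f (k %% D)%N by rewrite /f fourier_functional_mod.
set m := (n %/ D)%N; set r := (n %% D)%N.
have -> : n = (m * D + r)%N by rewrite /m /r -divn_eq.
rewrite -(big_mkord xpredT f) (@big_cat_nat _ _ _ (m * D)%N) ?leq_addr //=.
rewrite prod_nat_periodic // exprMn exprD; apply: ler_pM; rewrite ?exprn_ge0 ?prodr_ge0 //.
  rewrite -exprM [(m * 2)%N]mulnC !exprM -prodrXl.
  apply: lerXn2r; last exact: prod_sqr_fourier_block_le.
    by rewrite nnegrE prodr_ge0 // => s _; rewrite exprn_ge0.
  by rewrite nnegrE exprn_ge0 ?ler0n.
rewrite [(2 * r)%N]mulnC exprM; apply: lerXn2r; rewrite ?nnegrE ?exprn_ge0 ?ler0n ?prodr_ge0 //.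
rewrite -[r in _ ^+ r](addKn (m * D)) -prodr_const_nat.
by apply: ler_prod => k _; rewrite f_ge0 cmod_fourier_functional_le.
Qed.

Lemma prod_fnorm_fourier_functional_ge n :
  D%:R ^+ n <= \prod_(k < n) fnorm (fourier_functional k).
Proof.
rewrite -[n in _ ^+ n]card_ord -prodr_const; apply: ler_prod => k _.
by rewrite ler0n fnorm_fourier_functional_ge.
Qed.

Lemma fnorm_prod_fourier_functional_le n :
  fnorm (fun x => \prod_(k < n) fourier_functional k x) <=
    Num.sqrt (D%:R ^+ (D * (n %/ D) + 2 * (n %% D))).
Proof.
apply: fnorm_le => [|y y1]; first exact: leq_trans (prim_order_gt0 zD) hD.
rewrite cmod_prod -[X in X <= _]ger0_norm ?prodr_ge0 // => [|k _]; last exact: cmod_ge0.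
rewrite -sqrtr_sqr ler_sqrt ?exprn_ge0 ?ler0n //.
by apply: prod_fourier_functional_sqr_le; rewrite y1.
Qed.

End FourierFunctionals.

Lemma sqrt_block_le_admissible {R : realType} (n d D : nat) (C : R) :
  (0 < D)%N -> (D <= d)%N -> cn_admissible n d C ->
  Num.sqrt (D%:R ^+ (D * (n %/ D))) <= C.
Proof.
move=> D_gt0 hD admC.
have [z zD] : exists z : R[i], D.-primitive_root z.
  by apply: closed_prim_root_exists; rewrite // pnatr_eq0 -lt0n.
have := admC _ (fourier_functional_is_functional hD z).
move/(le_trans (prod_fnorm_fourier_functional_ge hD z zD n)).
set F := fnorm _ => lower.
pose U : R := Num.sqrt (D%:R ^+ (D * (n %/ D) + 2 * (n %% D))).
have upper : F <= U := fnorm_prod_fourier_functional_le hD z zD n.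
have U_gt0 : 0 < U by rewrite sqrtr_gt0 exprn_gt0 ?ltr0n.
have sqrt_blockU : Num.sqrt (D%:R ^+ (D * (n %/ D))) * U = D%:R ^+ n.
  rewrite -sqrtrM ?exprn_ge0 ?ler0n // -exprD.
  have -> : (D * (n %/ D) + (D * (n %/ D) + 2 * (n %% D)) = n * 2)%N.
    by have := divn_eq n D; lia.
  by rewrite exprM sqrtr_sqr ger0_norm ?exprn_ge0 ?ler0n.
have C_ge0 : 0 <= C.
  rewrite leNgt; apply/negP => C_lt0.
  have : C * F <= 0 by rewrite nmulr_rle0 // fnorm_ge0 // (leq_trans D_gt0 hD).
  by rewrite leNgt (lt_le_trans _ lower) // exprn_gt0 // ltr0n.
by rewrite -(ler_pM2r U_gt0) sqrt_blockU (le_trans lower) // ler_wpM2l.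
Qed.

Lemma half_sqrt_ratio_le_sqrt_block {R : realType} {n d : nat} :
  (0 < n)%N -> (0 < d)%N ->
  2^-1 * Num.sqrt (d%:R ^+ n / (24 * n)%:R ^+ d) <=
    Num.sqrt ((minn d n)%:R ^+ (minn d n * (n %/ minn d n)) : R).
Proof.
move=> n_gt0 d_gt0.
have K_gt0 : 0 < (24 * n)%:R ^+ d :> R by rewrite exprn_gt0 // ltr0n muln_gt0.
rewrite mulrC ler_pdivrMr // -[X in _ <= _ * X]ger0_norm // -sqrtr_sqr -sqrtrM ?exprn_ge0 //.
rewrite ler_sqrt ?mulr_ge0 ?exprn_ge0 ?ler0n // ler_pdivrMr //.
rewrite -!natrX -!natrM ler_nat.
by have := expn_le_block_bound n_gt0 d_gt0; nia.
Qed.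

Theorem proposition3p1 (R : realType) (n d : nat) (hn : (1 <= n)%N) (hd : (1 <= d)%N) :
  2^-1 * Num.sqrt ((d%:R ^+ n) / ((24 * n)%:R ^+ d)) <= cn_linfty R n d.
Proof.
apply: lb_le_inf => [|C admC].
  by exists ((2 * n.+1 * d)%:R ^+ n); exact: cn_admissible_grid_bound.
apply: le_trans (half_sqrt_ratio_le_sqrt_block hn hd) _.
by apply: sqrt_block_le_admissible admC; rewrite ?leq_min ?hn ?hd ?geq_minl.
Qed.
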